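(* Let $G$ and $H$ be finite precovers of the rose $R_k$ and let $K$ be a quotient of the precover $G \sqcup H$ whose restriction to $G$ is injective. For $n$ large let $\overline{G}$ be a random degree $n$ completion of $G$. Then, with $G$, $H$, $K$ fixed and $n \to \infty$, $$\mathbb{E}\big(\mu_{K \to \overline{G}}\big) = n^{\chi_G(K)} + \mathcal{O}\big(n^{\chi_G(K) - 1}\big).$$
   Context: The rose $R_k$ has one vertex and $k$ oriented loops labelled $a_1,\ldots,a_k$. A precover of $R_k$ is a finite oriented graph with edges labelled by $a_1,\ldots,a_k$ such that each vertex has at most one outgoing and at most one incoming edge of each label; maps are label- and orientation-preserving graph morphisms. A quotient of a precover $P$ is a surjective, locally injective, label- and orientation-preserving simplicial map $P \twoheadrightarrow K$. Random degree $n$ completion: let $G'$ be the disjoint union of $G$ with $n - |V(G)|$ isolated vertices; for each $j$, choose uniformly at random (independently in $j$) a bijection from the set of vertices of $G'$ lacking an outgoing $a_j$-edge to those lacking an incoming $a_j$-edge, and add an $a_j$-edge from each $v$ to its image; the result $\overline{G}$ contains $G$ as a subgraph. $\mu_{K \to \overline{G}}$ is the number of injective maps $K \to \overline{G}$ such that the composition $G \to K \to \overline{G}$ is the natural inclusion of $G$ in $\overline{G}$. The relative Euler characteristic is $\chi_G(K) = \chi(K) - \chi(G)$, where $\chi$ denotes (number of vertices) minus (number of edges). *)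

From HB Require Import structures.
From mathcomp Require Import all_boot all_order all_algebra all_fingroup.
Set Implicit Arguments. Unset Strict Implicit. Unset Printing Implicit Defensive.
Import Order.TTheory GRing.Theory Num.Theory.

(* A labelled oriented graph over the rose R_k on a finite vertex type V is
   given by, for each label j : 'I_k, the relation E j u v  <=>  there is an
   a_j-edge from u to v.  (In a precover there is at most one a_j-edge from u,
   so edges are determined by (label, source, target).) *)

Definition is_precover (k : nat) (V : finType) (E : 'I_k -> rel V) : Prop :=
  (forall j u v w, E j u v -> E j u w -> v = w) /\
  (forall j u v w, E j u w -> E j v w -> u = v).

Definition num_edges (k : nat) (V : finType) (E : 'I_k -> rel V) : nat :=
  \sum_(j < k) #|[pred p : V * V | E j p.1 p.2]|.

Definition chi (k : nat) (V : finType) (E : 'I_k -> rel V) : int :=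
  (#|V|)%:Z - (num_edges E)%:Z.

Definition sum_rel (k : nat) (V1 V2 : finType) (E1 : 'I_k -> rel V1)
  (E2 : 'I_k -> rel V2) : 'I_k -> rel (V1 + V2)%type :=
  fun j x y => match x, y with
               | inl u, inl v => E1 j u v
               | inr u, inr v => E2 j u v
               | _, _ => false
               end.

Definition is_morph (k : nat) (V1 V2 : finType) (E1 : 'I_k -> rel V1)
  (E2 : 'I_k -> rel V2) (f : V1 -> V2) : Prop :=
  forall j x y, E1 j x y -> E2 j (f x) (f y).

(* quotient: morphism surjective on vertices and on edges.  (Local
   injectivity is automatic for label/orientation-preserving maps between
   precovers.) *)
Definition is_quotient (k : nat) (V1 V2 : finType) (E1 : 'I_k -> rel V1)
  (E2 : 'I_k -> rel V2) (f : V1 -> V2) : Prop :=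
  [/\ is_morph E1 E2 f,
      (forall y, exists x, f x = y) &
      (forall j y1 y2, E2 j y1 y2 ->
         exists x1 x2, [/\ E1 j x1 x2, f x1 = y1 & f x2 = y2])].

(* Vertex set of G' = G plus n - |V(G)| isolated vertices:
   (VG + 'I_(n - #|VG|)).  A degree-n completion is encoded by a k-tuple of
   permutations s of this vertex set extending the partial bijections of G:
   the a_j-edges of the completion are v -> s j v.  The random bijection from
   vertices lacking an outgoing a_j-edge to those lacking an incoming one is
   exactly the restriction of s j to the former, and this correspondence is a
   bijection, so the uniform measure on completions is the uniform measure on
   the following set. *)
Definition completions (k : nat) (VG : finType) (EG : 'I_k -> rel VG) (n : nat)
  : {set {ffun 'I_k -> {perm (VG + 'I_(n - #|VG|))%type}}} :=
  [set s : {ffun 'I_k -> {perm (VG + 'I_(n - #|VG|))%type}} | [forall j, forall u, forall v, EG j u v ==> (s j (inl u) == inl v)]].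

Definition mu (k : nat) (VG VH VK : finType) (EK : 'I_k -> rel VK)
  (q : (VG + VH)%type -> VK) (n : nat)
  (s : {ffun 'I_k -> {perm (VG + 'I_(n - #|VG|))%type}}) : nat :=
  #|[set f : {ffun VK -> (VG + 'I_(n - #|VG|))%type} |
      [&& injectiveb f,
          [forall j, forall x, forall y, EK j x y ==> (s j (f x) == f y)] &
          [forall u, f (q (inl u)) == inl u]]]|.

Definition expected_mu (k : nat) (VG VH VK : finType) (EG : 'I_k -> rel VG)
  (EK : 'I_k -> rel VK) (q : (VG + VH)%type -> VK) (n : nat) : rat :=
  ((\sum_(s in completions EG n) (mu EK q s)%:R) / (#|completions EG n|)%:R)%R.

From HB Require Import structures.
From mathcomp Require Import all_boot all_order all_algebra all_fingroup.
From mathcomp Require Import ring lra zify.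
Set Implicit Arguments. Unset Strict Implicit. Unset Printing Implicit Defensive.
Import Order.TTheory GRing.Theory Num.Theory.

(* A degree-n completion of G is a k-tuple of permutations of the n vertices,
   the j-th one extending the partial bijection given by the a_j-edges of G; a
   partial injection with e edges on an n-set extends to exactly (n - e)!
   permutations. Count the pairs (completion, embedding f of K) in two ways:
   there are (n - |V_G|)_(|V_K| - |V_G|) injections f of the vertices of K
   extending the inclusion of G (falling factorial), and each is an embedding
   into exactly prod_j (n - e_j(K))! completions. Hence
     E(mu) = (n - |V_G|)_(|V_K| - |V_G|) / prod_j (n - e_j(G))_(e_j(K) - e_j(G)).
   Every factor of these falling factorials lies in [n - |V_K|, n], so a
   falling factorial with d factors is n^d (1 - O(1/n)), and the exponents
   add up to chi(K) - chi(G). *)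

Section PartialInjection.
Variable T : finType.
Implicit Types (R : rel T) (s : {perm T}).

Definition partial_inj R : Prop :=
  (forall u v w, R u v -> R u w -> v = w) /\ (forall u v w, R u w -> R v w -> u = v).

Definition edge_set R : {set T * T} := [set p | R p.1 p.2].
Definition rel_dom R : {set T} := [set u | [exists v, R u v]].
Definition rel_ran R : {set T} := [set v | [exists u, R u v]].

Definition perm_ext R : {set {perm T}} :=
  [set s : {perm T} | [forall u, forall v, R u v ==> (s u == v)]].

Lemma perm_extP R s : reflect (forall u v, R u v -> s u = v) (s \in perm_ext R).
Proof.
rewrite inE; apply: (iffP forallP) => [h u v Ruv | h u].
  exact/eqP/(implyP (forallP (h u) v)).
by apply/forallP => v; apply/implyP => /h ->.
Qed.

Variable R : rel T.

Lemma rel_domP x : reflect (exists y, R x y) (x \in rel_dom R).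
Proof. by rewrite inE; apply: existsP. Qed.

Lemma rel_ranP y : reflect (exists x, R x y) (y \in rel_ran R).
Proof. by rewrite inE; apply: existsP. Qed.

Hypothesis hR : partial_inj R.

Lemma card_rel_dom : #|rel_dom R| = #|edge_set R|.
Proof.
have -> : rel_dom R = [set p.1 | p in edge_set R].
  apply/setP => u; apply/rel_domP/imsetP => [[v Ruv] | [[x v]]].
    by exists (u, v); rewrite ?inE.
  by rewrite inE => Rxv ->; exists v.
apply: card_in_imset => -[x y] [x' y']; rewrite !inE /= => Rxy Rxy' exx'.
by rewrite -exx' in Rxy' *; rewrite (hR.1 _ _ _ Rxy Rxy').
Qed.

Lemma card_rel_ran : #|rel_ran R| = #|edge_set R|.
Proof.
have -> : rel_ran R = [set p.2 | p in edge_set R].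
  apply/setP => v; apply/rel_ranP/imsetP => [[u Ruv] | [[u y]]].
    by exists (u, v); rewrite ?inE.
  by rewrite inE => Ruy ->; exists u.
apply: card_in_imset => -[x y] [x' y']; rewrite !inE /= => Rxy Rxy' eyy'.
by rewrite -eyy' in Rxy' *; rewrite (hR.2 _ _ _ Rxy Rxy').
Qed.

(* Off the domain of [R], the i-th element of the complement of the domain is
   sent to the i-th element of the complement of the range, which has the same
   size. *)
Definition ext_fun (x : T) : T :=
  if [pick y | R x y] is Some y then y
  else nth x (enum (~: rel_ran R)) (index x (enum (~: rel_dom R))).

Lemma ext_fun_rel x y : R x y -> ext_fun x = y.
Proof.
rewrite /ext_fun => Rxy; case: pickP => [z Rxz | /(_ y)]; last by rewrite Rxy.
exact: hR.1 Rxz Rxy.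
Qed.

Lemma ext_fun_compl x : x \notin rel_dom R ->
  ext_fun x = nth x (enum (~: rel_ran R)) (index x (enum (~: rel_dom R))).
Proof.
rewrite /ext_fun => /rel_domP xD; case: pickP => // y Rxy.
by case: xD; exists y.
Qed.

Lemma index_compl_dom x : x \notin rel_dom R ->
  index x (enum (~: rel_dom R)) < size (enum (~: rel_ran R)).
Proof.
move=> xD; have card_compl : #|~: rel_ran R| = #|~: rel_dom R|.
  by apply/eqP; rewrite -(eqn_add2l #|rel_ran R|) cardsC card_rel_ran -card_rel_dom cardsC.
by rewrite -cardE card_compl cardE index_mem mem_enum in_setC.
Qed.

Lemma ext_fun_notin_ran x : x \notin rel_dom R -> ext_fun x \notin rel_ran R.
Proof.
move=> xD; rewrite ext_fun_compl // -in_setC -mem_enum mem_nth //.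
exact: index_compl_dom.
Qed.

Lemma ext_fun_inj : injective ext_fun.
Proof.
move=> x x'; case: (rel_domP x) => [[y Rxy] | /rel_domP xD];
  case: (rel_domP x') => [[y' Rxy'] | /rel_domP x'D].
- rewrite (ext_fun_rel Rxy) (ext_fun_rel Rxy') => eyy'.
  by rewrite eyy' in Rxy; apply: hR.2 Rxy Rxy'.
- move=> e; have := ext_fun_notin_ran x'D.
  by rewrite -e (ext_fun_rel Rxy) => /negP[]; apply/rel_ranP; exists x.
- move=> e; have := ext_fun_notin_ran xD.
  by rewrite e (ext_fun_rel Rxy') => /negP[]; apply/rel_ranP; exists x'.
rewrite !ext_fun_compl // (set_nth_default x' x) ?index_compl_dom // => /eqP.
rewrite nth_uniq ?index_compl_dom ?enum_uniq // => /eqP.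
by apply: (index_inj x); rewrite mem_enum in_setC.
Qed.

Lemma perm_ext_exists : exists s, s \in perm_ext R.
Proof.
by exists (perm ext_fun_inj); apply/perm_extP => u v Ruv; rewrite permE (ext_fun_rel Ruv).
Qed.

Lemma card_perm_ext : #|perm_ext R| = (#|T| - #|edge_set R|)`!.
Proof.
have [s0 /perm_extP s0R] := perm_ext_exists.
(* [s] extends [R] iff [s * s0^-1] fixes the domain of [R] pointwise. *)
have -> : perm_ext R = (fun s => s * s0^-1)%g @^-1: [set t in perm_on (~: rel_dom R)].
  apply/setP => s; apply/perm_extP/idP => [sR | ]; rewrite !inE.
    apply/subsetP => x; rewrite !inE permM; apply: contra => /existsP [v Rxv].
    by rewrite (sR _ _ Rxv) -(s0R _ _ Rxv) permK.
  move=> /subsetP sD u v Ruv.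
  have : u \notin ~: rel_dom R by rewrite in_setC negbK; apply/rel_domP; exists v.
  move=> /(contra (sD u)); rewrite inE negbK permM -(s0R _ _ Ruv) => /eqP.
  by move/(canRL (permKV s0)).
rewrite card_preimset; last exact: mulIg.
by rewrite cardsE card_perm -card_rel_dom cardsCs setCK.
Qed.

Lemma card_edge_set_le : #|edge_set R| <= #|T|.
Proof. by rewrite -card_rel_dom max_card. Qed.

End PartialInjection.

Definition perm_ext_tuple (k : nat) (T : finType) (E : 'I_k -> rel T) :
    {set {ffun 'I_k -> {perm T}}} :=
  [set s : {ffun 'I_k -> {perm T}} | [forall j, s j \in perm_ext (E j)]].

Lemma card_perm_ext_tuple (k : nat) (T : finType) (E : 'I_k -> rel T) :
  (forall j, partial_inj (E j)) ->
  #|perm_ext_tuple E| = (\prod_j (#|T| - #|edge_set (E j)|)`!)%N.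
Proof. by move=> hE; rewrite cardsXn; apply: eq_bigr => j _; apply: card_perm_ext. Qed.

Section RelImage.
Variables (A B : finType) (f : A -> B) (R : rel A).

Definition rel_image : rel B :=
  fun a b => [exists x, exists y, [&& R x y, f x == a & f y == b]].

Lemma rel_imageP a b :
  reflect (exists x y, [/\ R x y, f x = a & f y = b]) (rel_image a b).
Proof.
apply: (iffP existsP) => [[x /existsP[y /and3P[Rxy /eqP fx /eqP fy]]] | [x [y [Rxy fx fy]]]].
  by exists x, y.
by exists x; apply/existsP; exists y; rewrite Rxy fx fy !eqxx.
Qed.

Lemma perm_ext_image (s : {perm B}) :
  (s \in perm_ext rel_image) = [forall x, forall y, R x y ==> (s (f x) == f y)].
Proof.
apply/perm_extP/forallP => [sR x | sR a b /rel_imageP[x [y [Rxy <- <-]]]].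
  apply/forallP => y; apply/implyP => Rxy; apply/eqP/sR.
  by apply/rel_imageP; exists x, y.
exact/eqP/(implyP (forallP (sR x) y)).
Qed.

Hypothesis f_inj : injective f.

Lemma partial_inj_image : partial_inj R -> partial_inj rel_image.
Proof.
move=> [R_fun R_inj]; split=> a b b'.
  move=> /rel_imageP[x [y [Rxy <- <-]]] /rel_imageP[x' [y' [Rxy' /f_inj ex <-]]].
  by rewrite ex in Rxy'; rewrite (R_fun _ _ _ Rxy Rxy').
move=> /rel_imageP[x [y [Rxy <- <-]]] /rel_imageP[x' [y' [Rxy' <- /f_inj ey]]].
by rewrite ey in Rxy'; rewrite (R_inj _ _ _ Rxy Rxy').
Qed.

Lemma edge_set_image :
  edge_set rel_image = [set (f p.1, f p.2) | p in edge_set R].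
Proof.
apply/setP => -[a b]; rewrite inE; apply/rel_imageP/imsetP => /=.
  by move=> [x [y [Rxy <- <-]]]; exists (x, y); rewrite ?inE.
by move=> [[x y]]; rewrite inE => Rxy [-> ->]; exists x, y.
Qed.

Lemma card_edge_set_image : #|edge_set rel_image| = #|edge_set R|.
Proof.
by rewrite edge_set_image card_imset // => -[x y] [x' y'] /= [/f_inj -> /f_inj ->].
Qed.

Lemma card_edge_set_le_morph (R' : rel B) :
  (forall x y, R x y -> R' (f x) (f y)) -> #|edge_set R| <= #|edge_set R'|.
Proof.
move=> f_morph; rewrite -card_edge_set_image; apply/subset_leq_card/subsetP.
by move=> [a b]; rewrite !inE => /rel_imageP[x [y [Rxy <- <-]]]; apply: f_morph.
Qed.

End RelImage.

Section InjectiveExtension.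
Variables (A B C : finType) (h : A -> C) (b0 : B).
Hypothesis h_inj : injective h.

Definition inj_ext : {set {ffun C -> A + B}} :=
  [set f : {ffun C -> A + B} | injectiveb f && [forall u, f (h u) == inl u]].

Let D := {x : C | x \notin codom h}.

Let card_D : #|{: D}| = #|C| - #|A|.
Proof. by rewrite card_sig -(card_codom h_inj) -(cardC (mem (codom h))) addKn. Qed.

(* [b0] only fills branches of [restr] and [extend] that are never taken on
   [inj_ext]. *)
Let restr (f : {ffun C -> A + B}) : {ffun D -> B} :=
  [ffun d => if f (val d) is inr b then b else b0].

Let extend (g : {ffun D -> B}) : {ffun C -> A + B} :=
  [ffun x => if [pick u | h u == x] is Some u then inl u else inr (oapp g b0 (insub x))].

Let extend_h g u : extend g (h u) = inl u.
Proof.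
rewrite ffunE; case: pickP => [u' /eqP/h_inj -> // | /(_ u)].
by rewrite eqxx.
Qed.

Let extend_D g d : extend g (val d) = inr (g d).
Proof.
rewrite ffunE; case: pickP => [u /eqP hu | _]; last by rewrite valK.
by have := valP d; rewrite -hu codom_f.
Qed.

Let extendK : cancel extend restr.
Proof. by move=> g; apply/ffunP => d; rewrite ffunE extend_D. Qed.

Let in_codom_or_D x : x \in codom h \/ exists d : D, x = val d.
Proof.
by case: (boolP (x \in codom h)) => [|xD]; [left | right; exists (exist _ x xD)].
Qed.

Let extend_inj (g : {ffun D -> B}) : injective g -> injective (extend g).
Proof.
move=> g_inj x y.
case: (in_codom_or_D x) => [/codomP[u ->] | [d ->]];
  case: (in_codom_or_D y) => [/codomP[v ->] | [e ->]];
  rewrite ?extend_h ?extend_D // => -[]; [move=> -> | move/g_inj ->] => //.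
Qed.

Let restrK f : f \in inj_ext -> extend (restr f) = f.
Proof.
rewrite inE => /andP[/injectiveP f_inj /forallP f_h]; apply/ffunP => x.
case: (in_codom_or_D x) => [/codomP[u ->] | [d ->]]; first by rewrite extend_h (eqP (f_h u)).
rewrite extend_D ffunE; case fd: (f (val d)) => [u|] //.
have dh : val d = h u by apply: f_inj; rewrite fd (eqP (f_h u)).
by have := valP d; rewrite dh codom_f.
Qed.

Lemma card_inj_ext : #|inj_ext| = #|B| ^_ (#|C| - #|A|).
Proof.
have -> : inj_ext = extend @: [set g : {ffun D -> B} | injectiveb g].
  apply/setP => f; apply/idP/imsetP => [fE | [g]].
    exists (restr f); last by rewrite restrK.
    have f_inj : injective f by move: fE; rewrite inE => /andP[/injectiveP].
    rewrite inE; apply/injectiveP => d e rde; apply/val_inj/f_inj.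
    by rewrite -(restrK fE) !extend_D rde.
  rewrite !inE => /injectiveP g_inj ->.
  by apply/andP; split; [apply/injectiveP/extend_inj | apply/forallP => u; rewrite extend_h].
by rewrite (card_imset _ (can_inj extendK)) card_inj_ffuns card_D.
Qed.
End InjectiveExtension.

Lemma double_count (I J : finType) (A : {pred I}) (B : {pred J}) (P : I -> J -> bool) :
  \sum_(i in A) #|[set j in B | P i j]| = \sum_(j in B) #|[set i in A | P i j]|.
Proof.
have card_sum (K : finType) (C : {pred K}) (Q : pred K) :
    #|[set x in C | Q x]| = \sum_(x in C) Q x.
  rewrite -sum1_card big_mkcond [RHS]big_mkcond /=; apply: eq_bigr => x _.
  by rewrite !inE; case: (x \in C); case: (Q x).
rewrite (eq_bigr _ (fun i _ => card_sum _ _ _)) exchange_big /=.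
by apply: eq_bigr => j _; rewrite card_sum.
Qed.

Lemma precover_partial_inj (k : nat) (V : finType) (E : 'I_k -> rel V) :
  is_precover E -> forall j, partial_inj (E j).
Proof. by move=> [E_fun E_inj] j; split=> u v w; [apply: E_fun | apply: E_inj]. Qed.

Lemma num_edgesE (k : nat) (V : finType) (E : 'I_k -> rel V) :
  num_edges E = (\sum_j #|edge_set (E j)|)%N.
Proof. by apply: eq_bigr => j _; apply: eq_card => p; rewrite !inE. Qed.

Section ExpectedEmbeddings.
Variables (k : nat) (VG VH VK : finType).
Variables (EG : 'I_k -> rel VG) (EK : 'I_k -> rel VK) (q : (VG + VH)%type -> VK).
Hypotheses (hG : is_precover EG) (hK : is_precover EK).
Hypothesis q_morph : forall j u v, EG j u v -> EK j (q (inl u)) (q (inl v)).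
Hypothesis q_inj : injective (fun u => q (inl u)).

Local Notation eG j := #|edge_set (EG j)|.
Local Notation eK j := #|edge_set (EK j)|.
Local Notation vertices n := (VG + 'I_(n - #|VG|))%type.

Lemma card_VG_le_VK : #|VG| <= #|VK|.
Proof. exact: leq_card q_inj. Qed.

Lemma eG_le_eK j : eG j <= eK j.
Proof. by apply: (card_edge_set_le_morph q_inj) => u v; apply: q_morph. Qed.

Lemma eK_le_card j : eK j <= #|VK|.
Proof. exact/card_edge_set_le/precover_partial_inj. Qed.

Lemma chi_diff :
  (chi EK - chi EG = (#|VK| - #|VG|)%N%:Z - (\sum_j (eK j - eG j))%N%:Z)%R.
Proof.
have sum_e : (\sum_j (eK j - eG j) + \sum_j eG j = \sum_j eK j)%N.
  by rewrite -big_split /=; apply: eq_bigr => j _; rewrite subnK ?eG_le_eK.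
rewrite /chi !num_edgesE -sum_e; have := card_VG_le_VK; lia.
Qed.

Lemma card_vertices n : #|VG| <= n -> #|{: vertices n}| = n.
Proof. by move=> VG_le; rewrite card_sum card_ord subnKC. Qed.

Lemma completionsE n :
  completions EG n = perm_ext_tuple (fun j => rel_image inl (EG j)).
Proof. by apply/setP => s; rewrite !inE; apply: eq_forallb => j; rewrite perm_ext_image. Qed.

Lemma card_completions n : #|VG| <= n ->
  #|completions EG n| = (\prod_j (n - eG j)`!)%N.
Proof.
move=> VG_le; rewrite completionsE card_perm_ext_tuple => [|j].
  by apply: eq_bigr => j _; rewrite card_edge_set_image ?card_vertices //; apply: inl_inj.
exact: partial_inj_image inl_inj (precover_partial_inj hG j).
Qed.

Definition embeddings n := @inj_ext VG 'I_(n - #|VG|) VK (fun u => q (inl u)).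

Lemma mu_embeddings n (s : {ffun 'I_k -> {perm vertices n}}) : mu EK q s =
  #|[set f in embeddings n | s \in perm_ext_tuple (fun j => rel_image f (EK j))]|.
Proof.
apply: eq_card => f; rewrite !inE [RHS]andbAC -andbA; congr [&& _, _ & _].
by apply: eq_forallb => j; rewrite perm_ext_image.
Qed.

Lemma card_compatible_completions n f : #|VG| <= n -> f \in embeddings n ->
  #|[set s in completions EG n | s \in perm_ext_tuple (fun j => rel_image f (EK j))]|
  = (\prod_j (n - eK j)`!)%N.
Proof.
move=> VG_le; rewrite inE => /andP[/injectiveP f_inj /forallP f_q].
have compatible_completion s j : s j \in perm_ext (rel_image f (EK j)) ->
    s j \in perm_ext (rel_image inl (EG j)).
  rewrite !perm_ext_image => /forallP s_K; apply/forallP => u; apply/forallP => v.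
  apply/implyP => /q_morph Kuv; rewrite -(eqP (f_q u)) -(eqP (f_q v)).
  exact: (implyP (forallP (s_K _) _)).
have -> : [set s in completions EG n | s \in perm_ext_tuple (fun j => rel_image f (EK j))]
    = perm_ext_tuple (fun j => rel_image f (EK j)).
  apply/setP => s; rewrite completionsE !inE andb_idl // => /forallP s_K.
  by apply/forallP => j; apply: compatible_completion.
rewrite card_perm_ext_tuple => [|j].
  by apply: eq_bigr => j _; rewrite card_edge_set_image ?card_vertices.
exact: partial_inj_image (precover_partial_inj hK j).
Qed.

Lemma card_embeddings n : #|VG| < n ->
  #|embeddings n| = (n - #|VG|) ^_ (#|VK| - #|VG|).
Proof.
by rewrite -subn_gt0 => n_gt; rewrite (card_inj_ext (Ordinal n_gt) q_inj) card_ord.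
Qed.

Lemma expected_muE n : #|VK| < n -> expected_mu EG EK q n =
  (((n - #|VG|) ^_ (#|VK| - #|VG|))%:R / (\prod_j (n - eG j) ^_ (eK j - eG j))%:R)%R.
Proof.
move=> VK_lt; have VG_lt : #|VG| < n by apply: leq_ltn_trans card_VG_le_VK VK_lt.
have sum_mu : \sum_(s in completions EG n) mu EK q s
    = #|embeddings n| * \prod_j (n - eK j)`!.
  rewrite (eq_bigr _ (fun s _ => mu_embeddings s)) double_count -sum_nat_const.
  by apply: eq_bigr => f f_emb; rewrite card_compatible_completions // ltnW.
have fact_split j : (n - eG j)`! = (n - eG j) ^_ (eK j - eG j) * (n - eK j)`!.
  have := eG_le_eK j; have := eK_le_card j => eK_le eG_le.
  have e_le : eK j - eG j <= n - eG j by lia.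
  by rewrite -(ffact_fact e_le); congr (_ * _`!); lia.
rewrite /expected_mu -natr_sum sum_mu (card_completions (ltnW VG_lt)).
rewrite (eq_bigr _ (fun j _ => fact_split j)) big_split /= (card_embeddings VG_lt).
have P_neq0 : ((\prod_j (n - eK j)`!)%:R != 0 :> rat)%R.
  by rewrite pnatr_eq0 -lt0n; apply: prodn_gt0 => j; apply: fact_gt0.
by rewrite !natrM -mulf_div (divff P_neq0) mulr1.
Qed.

End ExpectedEmbeddings.

Local Open Scope ring_scope.

Section PowerApproximation.
Variables (R : realFieldType) (x c : R).
Hypotheses (x_gt0 : 0 < x) (c_ge0 : 0 <= c).

Definition approx_pow (d : nat) (P : R) :=
  [/\ 0 <= P, P <= x ^+ d & x ^+ d - P <= d%:R * c / x * x ^+ d].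

Lemma approx_pow0 : approx_pow 0 1.
Proof. by split; rewrite ?expr0 ?mul0r ?subrr. Qed.

Lemma approx_pow1 y : 0 <= y <= x -> x - y <= c -> approx_pow 1 y.
Proof. by move=> /andP[y_ge0 y_le] xy; split; rewrite ?expr1 // mul1r divfK ?gt_eqF. Qed.

Lemma approx_powM d1 d2 P1 P2 :
  approx_pow d1 P1 -> approx_pow d2 P2 -> approx_pow (d1 + d2) (P1 * P2).
Proof.
move=> [P1_ge0 P1_le err1] [P2_ge0 P2_le err2].
have xd1_ge0 : 0 <= x ^+ d1 by rewrite exprn_ge0 ?ltW.
split; rewrite ?exprD; first exact: mulr_ge0.
  exact: ler_pM.
have -> : x ^+ d1 * x ^+ d2 - P1 * P2 = x ^+ d1 * (x ^+ d2 - P2) + P2 * (x ^+ d1 - P1) by ring.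
have -> : (d1 + d2)%:R * c / x * (x ^+ d1 * x ^+ d2) =
    x ^+ d1 * (d2%:R * c / x * x ^+ d2) + x ^+ d2 * (d1%:R * c / x * x ^+ d1).
  by rewrite natrD; ring.
by apply: lerD; [apply: ler_wpM2l | apply: ler_pM; rewrite ?subr_ge0].
Qed.

Lemma approx_pow_prod (I : finType) (d : I -> nat) (F : I -> R) :
  (forall i, approx_pow (d i) (F i)) -> approx_pow (\sum_i d i)%N (\prod_i F i).
Proof.
move=> h; apply: (big_ind2 approx_pow) => [|d1 d2 P1 P2 | i _]; last exact: h.
  exact: approx_pow0.
exact: approx_powM.
Qed.

Lemma approx_pow_ratio m e P1 P2 : 2 * e%:R * c <= x ->
  approx_pow m P1 -> approx_pow e P2 ->
  `|P1 / P2 - x ^ (m%:Z - e%:Z)| <= 2 * (m + e)%:R * c * x ^ (m%:Z - e%:Z - 1).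
Proof.
move=> ec_le [P1_ge0 P1_le err1] [P2_ge0 P2_le err2].
have x_neq0 : x != 0 by rewrite gt_eqF.
have -> : x ^ (m%:Z - e%:Z - 1) = x ^ (m%:Z - e%:Z) / x by rewrite expfzDr.
have -> : x ^ (m%:Z - e%:Z) = x ^+ m / x ^+ e by rewrite expfzDr // exprnN.
set a := x ^+ m in P1_le err1 *; set b := x ^+ e in P2_le err2 *.
have a_ge0 : 0 <= a by rewrite exprn_ge0 ?ltW.
have b_gt0 : 0 < b by rewrite exprn_gt0.
have b_ge0 := ltW b_gt0.
rewrite -(mulrA m%:R) in err1; rewrite -(mulrA e%:R) in err2.
set t := c / x in err1 err2 *.
have t_ge0 : 0 <= t by apply: divr_ge0 c_ge0 (ltW x_gt0).
have et_le : e%:R * t <= 1 / 2 by rewrite /t mulrA ler_pdivrMr //; lra.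
have b_le : b <= 2 * P2 by have := ler_wpM2r b_ge0 et_le; lra.
have P2_gt0 : 0 < P2 by lra.
(* [P1 b - a P2 = (P1 - a) b + a (b - P2)], and both terms are bounded by the
   error estimates. *)
have num_le : `|P1 * b - a * P2| <= (m%:R + e%:R) * t * a * b.
  have mta_ge0 : 0 <= m%:R * t * a by rewrite mulr_ge0 // mulr_ge0.
  have etb_ge0 : 0 <= e%:R * t * b by rewrite mulr_ge0 // mulr_ge0.
  rewrite ler_norml; apply/andP; split; nra.
have -> : P1 / P2 - a / b = (P1 * b - a * P2) / (P2 * b).
  by field; rewrite !gt_eqF.
rewrite normf_div (gtr0_norm (mulr_gt0 P2_gt0 b_gt0)) ler_pdivrMr ?mulr_gt0 //.
apply: (le_trans num_le).
have -> : 2 * (m + e)%:R * c * (a / b / x) * (P2 * b) = (m%:R + e%:R) * t * a * (2 * P2).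
  by rewrite natrD /t; field; rewrite !gt_eqF.
apply: ler_wpM2l b_le.
exact: mulr_ge0 (mulr_ge0 (addr_ge0 (ler0n _ _) (ler0n _ _)) t_ge0) a_ge0.
Qed.

End PowerApproximation.

Lemma approx_pow_ffact (R : realFieldType) (n c a b : nat) :
  (0 < n)%N -> (a <= n)%N -> (b <= a)%N -> (n + b <= a + c)%N ->
  approx_pow (n%:R : R) c%:R b (a ^_ b)%:R.
Proof.
move=> n_gt0 a_le b_le nb_le.
have n_pos : 0 < n%:R :> R by rewrite ltr0n.
rewrite ffact_prod natr_prod -[b in approx_pow _ _ b]card_ord -sum1_card.
apply: approx_pow_prod => // i; apply: approx_pow1 => //.
  by rewrite ler0n ler_nat; lia.
have := ltn_ord i; rewrite lerBlDl -natrD ler_nat; lia.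
Qed.

Theorem mainTheorem7 (k : nat) (VG VH VK : finType)
  (EG : 'I_k -> rel VG) (EH : 'I_k -> rel VH) (EK : 'I_k -> rel VK)
  (q : (VG + VH)%type -> VK)
  (hG : is_precover EG) (hH : is_precover EH) (hK : is_precover EK)
  (hq : is_quotient (sum_rel EG EH) EK q)
  (hinj : injective (fun u => q (inl u))) :
  exists C : rat, exists N : nat, forall n : nat, (N <= n)%N ->
    `| expected_mu EG EK q n - (n%:R : rat) ^ (chi EK - chi EG) |
      <= C * (n%:R : rat) ^ (chi EK - chi EG - 1).
Proof.
have q_morph j u v : EG j u v -> EK j (q (inl u)) (q (inl v)).
  by case: hq => morph _ _; apply: (morph j (inl u) (inl v)).
have VG_le := card_VG_le_VK hinj; have eG_le := eG_le_eK q_morph hinj.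
have eK_le := eK_le_card hK.
set m := (#|VK| - #|VG|)%N; set e := (\sum_j (#|edge_set (EK j)| - #|edge_set (EG j)|))%N.
exists (2 * (m + e)%:R * #|VK|%:R), (2 * e * #|VK| + #|VK| + 1)%N => n n_ge.
rewrite (chi_diff q_morph hinj) (expected_muE hG hK q_morph hinj); last by lia.
apply: approx_pow_ratio => //.
- by rewrite ltr0n; lia.
- by rewrite -[2]/(2%:R) -!natrM ler_nat; lia.
- by apply: approx_pow_ffact; lia.
rewrite natr_prod; apply: approx_pow_prod => // [|j]; first by rewrite ltr0n; lia.
by apply: approx_pow_ffact; have := eG_le j; have := eK_le j; lia.
Qed.
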